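(* Let $0<\lambda<1$ and $0<p<1$. Consider the functions \[ f(z)=\frac{z}{1-\frac{z}{p}+\lambda z\int_z^p\omega(t)\,dt}, \] where $\omega$ ranges over all functions analytic in $\mathbb{D}=\{z:|z|<1\}$ with $|\omega(z)|\le1$ on $\mathbb{D}$; these are exactly the functions in $\mathcal{U}_m(\lambda)$ with a simple pole at $p$. Write $f(z)=z+\sum_{k\ge2}a_kz^k$ for $|z|<p$. Then the region of variability of the coefficient $a_2$ is the closed disk \[ \left\{\frac1p-\lambda p u:\ u\in\overline{\mathbb{D}}\right\}, \] and \[ \frac1p-\lambda p\le |a_2|\le \frac1p+\lambda p. \]
   Context: For $\lambda\in(0,1)$ and $p\in(0,1)$, $\mathcal{U}_m(\lambda)$ denotes the family of functions $f$ meromorphic in $\mathbb{D}$ with a pole at $z=p$, having a Taylor expansion $f(z)=z+\sum_{k=2}^\infty a_k z^k$ for $|z|<p$, and satisfying $\left|\frac{z}{f(z)}-z\left(\frac{z}{f(z)}\right)'-1\right|<\lambda$ for every $z\in\mathbb{D}$. The integral is along any path in $\mathbb{D}$ from $z$ to $p$. *)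

From Stdlib Require Import Reals.
From Coquelicot Require Import Coquelicot.
Open Scope R_scope.

Definition in_unit_disk (z : C) : Prop := Cmod z < 1.

Definition holomorphic_on_unit_disk (w : C -> C) : Prop :=
  forall z : C, in_unit_disk z -> @ex_derive C_AbsRing C_NormedModule w z.

Definition admissible_omega (w : C -> C) : Prop :=
  holomorphic_on_unit_disk w /\ (forall z : C, in_unit_disk z -> Cmod (w z) <= 1).

(* Complex line integral of w along the straight segment from a to b
   (a path in D when a, b are in D, since D is convex):
   int_a^b w(t) dt = int_0^1 w(a + s (b - a)) (b - a) ds. *)
Definition seg_integral (w : C -> C) (a b : C) : C :=
  @RInt C_R_CompleteNormedModule
    (fun s : R => Cmult (w (Cplus a (Cmult (RtoC s) (Cminus b a)))) (Cminus b a)) 0 1.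

Definition f_omega (lam p : R) (w : C -> C) (z : C) : C :=
  Cdiv z (Cplus (Cminus (RtoC 1) (Cdiv z (RtoC p)))
                (Cmult (Cmult (RtoC lam) z) (seg_integral w z (RtoC p)))).

Definition taylor_coeffs_in (lam p : R) (w : C -> C) (a : nat -> C) : Prop :=
  forall z : C, Cmod z < p ->
    @is_pseries C_AbsRing C_NormedModule a z (f_omega lam p w z).

(* Taylor coefficients near 0 are read off on the real segment (0, p): there
   z / f(z) = 1 + z g(z) with g(z) = -1/p + lam int_z^p omega, so
   f(x) = x - x^2 g(x) + O(x^3), and comparing with the Taylor expansion of f gives
   a_0 = 0, a_1 = 1 and a_2 = -g(x) + O(x) = 1/p - lam int_x^p omega + O(x).  Since |int_x^p omega| <= p - x,
   letting x -> 0 yields |a_2 - 1/p| <= lam p.  Conversely, for the constant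
   omega = u with |u| <= 1, f(z) = z / ((1 - z/p) (1 + lam p u z)); expanding in partial
   fractions gives a_n = (al^n - be^n) / (al - be) with al = 1/p, be = -lam p u, so
   a_2 = al + be = 1/p - lam p u. *)

From Stdlib Require Import Reals Lra Lia.
From Coquelicot Require Import Coquelicot.
Open Scope R_scope.

(** * Taylor remainders of complex power series on the real axis *)

Lemma pow_n_Cpow (z : C) n : @pow_n C_AbsRing z n = (z ^ n)%C.
Proof. induction n as [|n IH]; [reflexivity|]. simpl. rewrite IH. reflexivity. Qed.

Lemma sum_n_fst (u : nat -> C) n :
  fst (sum_n u n) = sum_n (fun k => fst (u k)) n.
Proof.
  induction n as [|n IH]; [now rewrite !sum_O|].
  rewrite !sum_Sn, <- IH. reflexivity.
Qed.

Lemma sum_n_snd (u : nat -> C) n :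
  snd (sum_n u n) = sum_n (fun k => snd (u k)) n.
Proof.
  induction n as [|n IH]; [now rewrite !sum_O|].
  rewrite !sum_Sn, <- IH. reflexivity.
Qed.

Lemma is_series_C_fst_snd (u : nat -> C) (l : C) :
  @is_series C_AbsRing C_NormedModule u l ->
  is_series (fun n => fst (u n)) (fst l) /\ is_series (fun n => snd (u n)) (snd l).
Proof.
  unfold is_series. intros H. destruct l as [l1 l2]. split.
  - apply (filterlim_ext (fun n => fst (sum_n u n))); [intro n; apply sum_n_fst|].
    exact (filterlim_comp _ _ _ _ fst _ _ _ H (continuous_fst l1 l2)).
  - apply (filterlim_ext (fun n => snd (sum_n u n))); [intro n; apply sum_n_snd|].
    exact (filterlim_comp _ _ _ _ snd _ _ _ H (continuous_snd l1 l2)).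
Qed.

Lemma is_pseries_C_fst_snd (a : nat -> C) (x : R) (l : C) :
  @is_pseries C_AbsRing C_NormedModule a (RtoC x) l ->
  is_pseries (fun k => fst (a k)) x (fst l) /\ is_pseries (fun k => snd (a k)) x (snd l).
Proof.
  intros H. apply is_series_C_fst_snd in H as [H1 H2].
  rewrite !is_pseries_R. split.
  - eapply is_series_ext; [|exact H1]. intro k. simpl. rewrite pow_n_Cpow, <- RtoC_pow. simpl. ring.
  - eapply is_series_ext; [|exact H2]. intro k. simpl. rewrite pow_n_Cpow, <- RtoC_pow. simpl. ring.
Qed.

Lemma CV_radius_decr_n (b : nat -> R) n : CV_radius (PS_decr_n b n) = CV_radius b.
Proof.
  induction n as [|n IH]; [apply CV_radius_ext; reflexivity|].
  rewrite <- IH, <- (CV_radius_decr_1 (PS_decr_n b n)). apply CV_radius_ext. intro k.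
  unfold PS_decr_n, PS_decr_1. f_equal. lia.
Qed.

Lemma CV_radius_ge (b : nat -> R) (r : R) :
  (forall x, 0 <= x < r -> ex_pseries b x) -> Rbar_le r (CV_radius b).
Proof.
  intros H. apply Rbar_not_lt_le. intros Hlt.
  pose proof (CV_radius_ge_0 b) as H0.
  destruct (CV_radius b) as [c| |] eqn:E; simpl in Hlt, H0; try easy.
  apply (CV_disk_outside b ((c + r) / 2)).
  - rewrite E. simpl. rewrite Rabs_pos_eq; lra.
  - destruct (H ((c + r) / 2)) as [l Hl]; [lra|].
    apply ex_series_lim_0. exists l. apply is_pseries_R, Hl.
Qed.

Lemma is_pseries_remainder_bound (b : nat -> R) (g : R -> R) (r : R) (n : nat) : 0 < r ->
  (forall x, Rabs x < r -> is_pseries b x (g x)) ->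
  exists M d, 0 < d /\ forall x, Rabs x < d ->
    Rabs (g x - sum_f_R0 (fun k => b k * x ^ k) n) <= M * Rabs x ^ S n.
Proof.
  intros Hr Hg.
  assert (Hin : forall x, Rabs x < r -> Rbar_lt (Rabs x) (CV_radius b)).
  { intros x Hx. apply (Rbar_lt_le_trans _ r); [exact Hx|].
    apply CV_radius_ge. intros y Hy. exists (g y). apply Hg. rewrite Rabs_pos_eq; lra. }
  set (h := PSeries (PS_decr_n b (S n))).
  assert (Hh : continuity_pt h 0).
  { apply PSeries_continuity. rewrite CV_radius_decr_n. apply Hin. rewrite Rabs_R0. exact Hr. }
  destruct (proj1 (continuity_pt_locally h 0) Hh (mkposreal 1 Rlt_0_1)) as [d Hd].
  exists (Rabs (h 0) + 1), (Rmin d r). split; [apply Rmin_pos; [apply cond_pos|exact Hr]|].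
  intros x Hx.
  pose proof (Rmin_l d r). pose proof (Rmin_r d r).
  rewrite <- (is_pseries_unique b x (g x)) by (apply Hg; lra).
  rewrite (PSeries_decr_n b n x) by (apply CV_radius_inside, Hin; lra). fold h.
  replace (sum_f_R0 (fun k => b k * x ^ k) n + x ^ S n * h x - sum_f_R0 (fun k => b k * x ^ k) n)
    with (x ^ S n * h x) by ring.
  rewrite Rabs_mult, <- RPow_abs, Rmult_comm.
  apply Rmult_le_compat_r; [apply pow_le, Rabs_pos|].
  assert (Rabs (h x - h 0) < 1).
  { apply Hd. change (Rabs (x - 0) < d). rewrite Rminus_0_r. lra. }
  pose proof (Rabs_triang_inv (h x) (h 0)). lra.
Qed.

Lemma Cmod_le_Rabs_fst_snd (z : C) : Cmod z <= Rabs (fst z) + Rabs (snd z).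
Proof.
  pose proof (Rabs_pos (fst z)). pose proof (Rabs_pos (snd z)).
  unfold Cmod. rewrite <- (sqrt_pow2 (Rabs (fst z) + Rabs (snd z))) by lra.
  apply sqrt_le_1_alt. rewrite <- (pow2_abs (fst z)), <- (pow2_abs (snd z)). nra.
Qed.

Lemma fst_sum_n_RtoC_mult (a : nat -> C) (x : R) n :
  fst (sum_n (fun k => RtoC (x ^ k) * a k)%C n) = sum_f_R0 (fun k => fst (a k) * x ^ k) n.
Proof.
  rewrite sum_n_fst, <- sum_n_Reals. apply sum_n_ext. intro k. simpl. ring.
Qed.

Lemma snd_sum_n_RtoC_mult (a : nat -> C) (x : R) n :
  snd (sum_n (fun k => RtoC (x ^ k) * a k)%C n) = sum_f_R0 (fun k => snd (a k) * x ^ k) n.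
Proof.
  rewrite sum_n_snd, <- sum_n_Reals. apply sum_n_ext. intro k. simpl. ring.
Qed.

Lemma is_pseries_C_remainder_bound (a : nat -> C) (F : C -> C) (r : R) (n : nat) : 0 < r ->
  (forall z : C, Cmod z < r -> @is_pseries C_AbsRing C_NormedModule a z (F z)) ->
  exists M d, 0 < d /\ forall x : R, Rabs x < d ->
    Cmod (F x - sum_n (fun k => RtoC (x ^ k) * a k) n)%C <= M * Rabs x ^ S n.
Proof.
  intros Hr HF.
  assert (Hreal : forall x : R, Rabs x < r ->
    is_pseries (fun k => fst (a k)) x (fst (F x)) /\ is_pseries (fun k => snd (a k)) x (snd (F x))).
  { intros x Hx. apply is_pseries_C_fst_snd, HF. rewrite Cmod_R. exact Hx. }
  destruct (is_pseries_remainder_bound (fun k => fst (a k)) (fun x => fst (F x)) r n Hr)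
    as [M1 [d1 [Hd1 H1]]].
  { intros x Hx. apply Hreal, Hx. }
  destruct (is_pseries_remainder_bound (fun k => snd (a k)) (fun x => snd (F x)) r n Hr)
    as [M2 [d2 [Hd2 H2]]].
  { intros x Hx. apply Hreal, Hx. }
  exists (M1 + M2), (Rmin d1 d2). split; [apply Rmin_pos; assumption|].
  intros x Hx.
  pose proof (Rmin_l d1 d2). pose proof (Rmin_r d1 d2).
  eapply Rle_trans; [apply Cmod_le_Rabs_fst_snd|].
  unfold Cminus, Cplus, Copp; cbn [fst snd].
  rewrite fst_sum_n_RtoC_mult, snd_sum_n_RtoC_mult, Rmult_plus_distr_r.
  apply Rplus_le_compat; [apply H1|apply H2]; lra.
Qed.

Lemma Rle_of_le_plus_linear (m c L d : R) : 0 < d ->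
  (forall x, 0 < x < d -> m <= c + L * x) -> m <= c.
Proof.
  intros Hd H. apply Rnot_lt_le. intros Hlt.
  set (k := Rabs L + 1).
  assert (Hk : 0 < k) by (pose proof (Rabs_pos L); unfold k; lra).
  set (x := Rmin (d / 2) ((m - c) / (2 * k))).
  assert (Hx0 : 0 < x) by (apply Rmin_pos; [lra|apply Rdiv_lt_0_compat; lra]).
  assert (Hxd : x <= d / 2) by apply Rmin_l.
  assert (Hxk : x * (2 * k) <= m - c).
  { apply (Rmult_le_reg_r (/ (2 * k))); [apply Rinv_0_lt_compat; lra|].
    rewrite Rmult_assoc, Rinv_r, Rmult_1_r by lra. apply Rmin_r. }
  assert (L * x <= k * x) by (apply Rmult_le_compat_r; [lra|pose proof (Rle_abs L); unfold k; lra]).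
  specialize (H x ltac:(lra)). nra.
Qed.

Lemma peel_constant_term (b : C) (h : R -> C) (K L d : R) (n : nat) : 0 < d ->
  (forall x, 0 < x < d -> Cmod (h x) <= K) ->
  (forall x, 0 < x < d -> Cmod (b + x * h x)%C <= L * x ^ S n) ->
  b = 0%C /\ forall x, 0 < x < d -> Cmod (h x) <= L * x ^ n.
Proof.
  intros Hd Hh Hb.
  assert (Hb0 : b = 0%C).
  { apply Cmod_eq_0, Rle_antisym; [|apply Cmod_ge_0].
    apply (Rle_of_le_plus_linear _ 0 (Rabs L + K) (Rmin d 1)); [apply Rmin_pos; lra|].
    intros x Hx. pose proof (Rmin_l d 1). pose proof (Rmin_r d 1).
    replace b with ((b + x * h x) + - (x * h x))%C at 1 by ring.
    eapply Rle_trans; [apply Cmod_triangle|].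
    rewrite Cmod_opp, Cmod_mult, Cmod_R, Rabs_pos_eq by lra.
    assert (Hpow : x ^ n <= 1) by (rewrite <- (pow1 n); apply pow_incr; lra).
    assert (L * x ^ S n <= Rabs L * x).
    { pose proof (pow_le x n ltac:(lra)). simpl.
      apply (Rle_trans _ (Rabs L * (x * x ^ n))).
      - apply Rmult_le_compat_r; [nra|apply Rle_abs].
      - apply Rmult_le_compat_l; [apply Rabs_pos|nra]. }
    assert (x * Cmod (h x) <= x * K) by (apply Rmult_le_compat_l; [lra|apply Hh; lra]).
    pose proof (Hb x ltac:(lra)). lra. }
  split; [exact Hb0|].
  intros x Hx. specialize (Hb x Hx).
  rewrite Hb0, Cplus_0_l, Cmod_mult, Cmod_R, Rabs_pos_eq in Hb by lra.
  simpl in Hb. apply (Rmult_le_reg_l x); lra.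
Qed.

Lemma Cmod_div_one_add_expansion (x : R) (s : C) (K : R) :
  0 <= x -> Cmod s <= K -> x * K <= / 2 ->
  Cmod (x / (1 + x * s) - (x - x * x * s))%C <= 2 * K ^ 2 * x ^ 3.
Proof.
  intros Hx Hs HxK.
  assert (Hden : / 2 <= Cmod (1 + x * s)%C).
  { pose proof (Cmod_triangle (1 + x * s)%C (- (x * s))%C) as T.
    replace (1 + x * s + - (x * s))%C with (RtoC 1) in T by ring.
    rewrite Cmod_1, Cmod_opp, Cmod_mult, Cmod_R, Rabs_pos_eq in T by exact Hx.
    assert (x * Cmod s <= x * K) by (apply Rmult_le_compat_l; assumption). lra. }
  assert (Hnz : (1 + x * s)%C <> 0%C).
  { intros E. rewrite E, Cmod_0 in Hden. lra. }
  replace (x / (1 + x * s) - (x - x * x * s))%C with (x * x * x * (s * s) / (1 + x * s))%C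
    by (field; exact Hnz).
  rewrite Cmod_div, !Cmod_mult, Cmod_R, Rabs_pos_eq by (exact Hnz || exact Hx).
  pose proof (Cmod_ge_0 s).
  assert (Hs2 : Cmod s * Cmod s <= K ^ 2) by (simpl; nra).
  assert (Hx3 : 0 <= x * x * x) by (apply Rmult_le_pos; [apply Rmult_le_pos|]; exact Hx).
  apply (Rmult_le_reg_r (Cmod (1 + x * s))); [lra|].
  unfold Rdiv. rewrite Rmult_assoc, Rinv_l, Rmult_1_r by lra.
  assert (x * x * x * (Cmod s * Cmod s) <= x * x * x * K ^ 2)
    by (apply Rmult_le_compat_l; assumption).
  assert (0 <= x * x * x * K ^ 2) by (apply Rmult_le_pos; [exact Hx3|apply pow2_ge_0]).
  assert (x * x * x * K ^ 2 <= x * x * x * K ^ 2 * (2 * Cmod (1 + x * s)))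
    by (rewrite <- (Rmult_1_r (x * x * x * K ^ 2)) at 1; apply Rmult_le_compat_l; lra).
  simpl in *. lra.
Qed.

(** * Line integrals along segments *)

Lemma norm_C_R (c : C) : @norm R_AbsRing C_R_NormedModule c = Cmod c.
Proof.
  unfold norm. simpl. unfold prod_norm, Cmod. simpl.
  change (@norm R_AbsRing R_NormedModule (fst c)) with (Rabs (fst c)).
  change (@norm R_AbsRing R_NormedModule (snd c)) with (Rabs (snd c)).
  f_equal. rewrite <- !Rmult_assoc, !Rmult_1_r, <- !Rabs_mult, !Rabs_pos_eq by apply Rle_0_sqr.
  reflexivity.
Qed.

(* Coquelicot puts two uniform structures on C: Cmod balls ([AbsRing_UniformSpace C_AbsRing],
   the domain in [ex_derive_continuous]) and product balls ([C_UniformSpace], shared by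
   [C_NormedModule] and [C_R_NormedModule]).  The statements below fix which one is meant. *)

Lemma continuous_RtoC (s : R) :
  @continuous R_UniformSpace (AbsRing_UniformSpace C_AbsRing) RtoC s.
Proof.
  apply filterlim_locally. intro eps. exists eps. intros t Ht.
  change (Cmod (RtoC t - RtoC s)%C < eps). rewrite <- RtoC_minus, Cmod_R. exact Ht.
Qed.

Lemma continuous_segment (a b : C) (s : R) :
  @continuous R_UniformSpace (AbsRing_UniformSpace C_AbsRing)
    (fun t : R => (a + t * (b - a))%C) s.
Proof.
  apply (@continuous_plus _ _ (AbsRing_NormedModule C_AbsRing) (fun _ => a)).
  - apply continuous_const.
  - apply (@continuous_scal_l _ _ (AbsRing_NormedModule C_AbsRing) RtoC), continuous_RtoC.
Qed.

Lemma Cmod_seg_integral_le (w : C -> C) (a b : C) (M : R) :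
  (forall s, 0 <= s <= 1 ->
     @continuous (AbsRing_UniformSpace C_AbsRing) C_NormedModule w (a + s * (b - a))%C /\
     Cmod (w (a + s * (b - a))%C) <= M) ->
  Cmod (seg_integral w a b) <= M * Cmod (b - a).
Proof.
  intros Hw. unfold seg_integral.
  assert (Hex : @ex_RInt C_R_CompleteNormedModule
                  (fun s : R => w (a + s * (b - a)) * (b - a))%C 0 1).
  { apply ex_RInt_continuous. intros s Hs.
    rewrite Rmin_left, Rmax_right in Hs by lra.
    pose proof (@continuous_comp R_UniformSpace (AbsRing_UniformSpace C_AbsRing) C_NormedModule
                  _ w s (continuous_segment a b s) (proj1 (Hw s Hs))) as Hws.
    apply (@continuous_ext R_UniformSpace C_NormedModule
             (fun t : R => scal (b - a)%C (w (a + t * (b - a))%C))).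
    { intro t. apply Cmult_comm. }
    exact (continuous_scal_r _ _ s Hws). }
  assert (Hbound : forall s, 0 <= s <= 1 ->
    @norm R_AbsRing C_R_NormedModule (w (a + s * (b - a)) * (b - a))%C <= M * Cmod (b - a)).
  { intros s Hs. rewrite norm_C_R, Cmod_mult.
    apply Rmult_le_compat_r; [apply Cmod_ge_0|apply Hw, Hs]. }
  pose proof (norm_RInt_le_const _ 0 1 _ _ ltac:(lra) Hbound (RInt_correct _ _ _ Hex)) as H.
  rewrite norm_C_R in H. lra.
Qed.

Lemma in_unit_disk_segment (a b : C) (s : R) :
  in_unit_disk a -> in_unit_disk b -> 0 <= s <= 1 -> in_unit_disk (a + s * (b - a))%C.
Proof.
  unfold in_unit_disk. intros Ha Hb Hs.
  replace (a + s * (b - a))%C with (RtoC (1 - s) * a + s * b)%C by (rewrite RtoC_minus; ring).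
  eapply Rle_lt_trans; [apply Cmod_triangle|].
  rewrite !Cmod_mult, !Cmod_R, !Rabs_pos_eq by lra.
  assert (Hm : Rmax (Cmod a) (Cmod b) < 1) by (apply Rmax_lub_lt; assumption).
  assert ((1 - s) * Cmod a <= (1 - s) * Rmax (Cmod a) (Cmod b))
    by (apply Rmult_le_compat_l; [lra|apply Rmax_l]).
  assert (s * Cmod b <= s * Rmax (Cmod a) (Cmod b))
    by (apply Rmult_le_compat_l; [lra|apply Rmax_r]).
  lra.
Qed.

Lemma Cmod_seg_integral_admissible (w : C -> C) (a b : C) :
  admissible_omega w -> in_unit_disk a -> in_unit_disk b ->
  Cmod (seg_integral w a b) <= Cmod (b - a).
Proof.
  intros [Hhol Hbd] Ha Hb. rewrite <- (Rmult_1_l (Cmod (b - a))).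
  apply Cmod_seg_integral_le. intros s Hs.
  pose proof (in_unit_disk_segment a b s Ha Hb Hs) as Hz.
  split; [apply ex_derive_continuous, Hhol, Hz|apply Hbd, Hz].
Qed.

Lemma Cmod_seg_integral_le_length (w : C -> C) (x p : R) :
  admissible_omega w -> 0 <= x <= p -> p < 1 -> Cmod (seg_integral w x p) <= p - x.
Proof.
  intros Hw Hx Hp.
  assert (Hdisk : forall y, 0 <= y <= p -> in_unit_disk y)
    by (intros y Hy; unfold in_unit_disk; rewrite Cmod_R, Rabs_pos_eq; lra).
  eapply Rle_trans; [apply Cmod_seg_integral_admissible; [exact Hw|apply Hdisk..]; lra|].
  rewrite <- RtoC_minus, Cmod_R, Rabs_pos_eq; lra.
Qed.

Lemma seg_integral_const (u a b : C) : seg_integral (fun _ => u) a b = (u * (b - a))%C.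
Proof.
  unfold seg_integral. rewrite RInt_const.
  apply injective_projections; simpl; unfold scal; simpl; unfold mult; simpl; ring.
Qed.

(** * The disk of variability of the second coefficient *)

Lemma closed_disk_param (c z0 : C) (r : R) : 0 < r ->
  (exists u : C, Cmod u <= 1 /\ c = (z0 - RtoC r * u)%C) <-> Cmod (c - z0)%C <= r.
Proof.
  intros Hr. assert (Hr' : RtoC r <> 0%C) by (intros E; apply RtoC_inj in E; lra).
  split.
  - intros [u [Hu ->]].
    replace (z0 - RtoC r * u - z0)%C with (- (RtoC r * u))%C by ring.
    rewrite Cmod_opp, Cmod_mult, Cmod_R, Rabs_pos_eq by lra. nra.
  - intros Hc. exists ((z0 - c) / RtoC r)%C. split.
    + rewrite Cmod_div by exact Hr'. rewrite Cmod_R, Rabs_pos_eq by lra.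
      replace (z0 - c)%C with (- (c - z0))%C by ring. rewrite Cmod_opp.
      apply (Rmult_le_reg_r r); [exact Hr|]. unfold Rdiv.
      rewrite Rmult_assoc, Rinv_l, Rmult_1_r, Rmult_1_l by lra. exact Hc.
    + field. exact Hr'.
Qed.

Lemma Cmod_bounds_of_dist (c z0 : C) (r : R) :
  Cmod (c - z0)%C <= r -> Cmod z0 - r <= Cmod c <= Cmod z0 + r.
Proof.
  intros Hc. split.
  - pose proof (Cmod_triangle c (- (c - z0))%C) as T.
    replace (c + - (c - z0))%C with z0 in T by ring. rewrite Cmod_opp in T. lra.
  - pose proof (Cmod_triangle z0 (c - z0)%C) as T.
    replace (z0 + (c - z0))%C with c in T by ring. lra.
Qed.

Definition f_omega_slope (lam p : R) (w : C -> C) (z : C) : C :=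
  (- / p + lam * seg_integral w z p)%C.

Lemma f_omega_eq_slope (lam p : R) (w : C -> C) (z : C) :
  f_omega lam p w z = (z / (1 + z * f_omega_slope lam p w z))%C.
Proof. unfold f_omega, f_omega_slope, Cdiv. do 2 f_equal. ring. Qed.

Lemma Cmod_f_omega_slope_le (lam p : R) (w : C -> C) (x : R) :
  0 < lam -> 0 < p < 1 -> admissible_omega w -> 0 <= x <= p ->
  Cmod (f_omega_slope lam p w x) <= / p + lam * p.
Proof.
  intros Hlam Hp Hw Hx. unfold f_omega_slope.
  eapply Rle_trans; [apply Cmod_triangle|].
  rewrite Cmod_opp, Cmod_mult, <- RtoC_inv, !Cmod_R, !Rabs_pos_eq by
    (lra || apply Rlt_le, Rinv_0_lt_compat; lra).
  pose proof (Cmod_seg_integral_le_length w x p Hw Hx (proj2 Hp)).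
  assert (lam * Cmod (seg_integral w x p) <= lam * (p - x)) by (apply Rmult_le_compat_l; lra).
  assert (0 <= lam * x) by (apply Rmult_le_pos; lra).
  lra.
Qed.

Section SecondCoefficient.

Variables (lam p : R) (w : C -> C) (a : nat -> C).
Hypotheses (Hlam : 0 < lam) (Hp : 0 < p < 1).
Hypotheses (Hw : admissible_omega w) (Ha : taylor_coeffs_in lam p w a).

Let K := / p + lam * p.

Let K_pos : 0 < K.
Proof. unfold K. pose proof (Rinv_0_lt_compat p (proj1 Hp)). nra. Qed.

Let Cmod_slope_le (x : R) : 0 <= x <= p -> Cmod (f_omega_slope lam p w x) <= K.
Proof. intros Hx. apply Cmod_f_omega_slope_le; assumption. Qed.

Lemma taylor_horner_bound : exists L d, 0 < d <= p /\ forall x, 0 < x < d ->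
  Cmod (a 0%nat + x * (a 1%nat - 1 + x * (a 2%nat + f_omega_slope lam p w x)))%C <= L * x ^ 3.
Proof.
  destruct (is_pseries_C_remainder_bound a (f_omega lam p w) p 2 (proj1 Hp) Ha)
    as [M [d0 [Hd0 HM]]].
  set (d := Rmin (Rmin d0 p) (/ (2 * K))).
  assert (Hd0' : d <= d0) by (unfold d; eapply Rle_trans; apply Rmin_l).
  assert (Hdp : d <= p) by (unfold d; eapply Rle_trans; [apply Rmin_l|apply Rmin_r]).
  assert (HdK : d * K <= / 2).
  { apply (Rle_trans _ (/ (2 * K) * K)); [apply Rmult_le_compat_r; [lra|apply Rmin_r]|].
    right. field. lra. }
  exists (M + 2 * K ^ 2), d. split.
  { split; [|exact Hdp]. apply Rmin_pos; [apply Rmin_pos; lra|].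
    apply Rinv_0_lt_compat; lra. }
  intros x Hx. set (s := f_omega_slope lam p w x).
  assert (HxK : x * K <= / 2) by (apply (Rle_trans _ (d * K)); [apply Rmult_le_compat_r|]; lra).
  pose proof (Cmod_div_one_add_expansion x s K ltac:(lra) (Cmod_slope_le x ltac:(lra)) HxK)
    as Hexp.
  pose proof (HM x ltac:(rewrite Rabs_pos_eq; lra)) as Htay.
  rewrite Rabs_pos_eq, f_omega_eq_slope in Htay by lra. fold s in Htay.
  rewrite !sum_Sn, sum_O in Htay. repeat change (plus ?u ?v) with (Cplus u v) in Htay.
  rewrite !RtoC_pow in Htay.
  replace (a 0%nat + x * (a 1%nat - 1 + x * (a 2%nat + s)))%C with
    ((x / (1 + x * s) - (x - x * x * s))
     + - (x / (1 + x * s) - (x ^ 0 * a 0%nat + x ^ 1 * a 1%nat + x ^ 2 * a 2%nat)))%C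
    by ring.
  eapply Rle_trans; [apply Cmod_triangle|]. rewrite Cmod_opp. lra.
Qed.

Lemma Cmod_a2_sub_inv_p_le : Cmod (a 2%nat - RtoC (1 / p))%C <= lam * p.
Proof.
  destruct taylor_horner_bound as [L [d [[Hd Hdp] HL]]].
  destruct (peel_constant_term (a 0%nat) (fun x => a 1%nat - 1 + x * (a 2%nat + f_omega_slope lam p w x))%C
              (Cmod (a 1%nat - 1) + (Cmod (a 2%nat) + K)) L d 2 Hd) as [_ Hpeel1];
    [|exact HL|].
  { intros x Hx. eapply Rle_trans; [apply Cmod_triangle|].
    rewrite Cmod_mult, Cmod_R, Rabs_pos_eq by lra.
    pose proof (Cmod_triangle (a 2%nat) (f_omega_slope lam p w x)).
    pose proof (Cmod_slope_le x ltac:(lra)).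
    assert (0 <= Cmod (a 2%nat + f_omega_slope lam p w x)) by apply Cmod_ge_0.
    nra. }
  destruct (peel_constant_term (a 1%nat - 1)%C (fun x => a 2%nat + f_omega_slope lam p w x)%C
              (Cmod (a 2%nat) + K) L d 1 Hd) as [_ Hpeel2]; [|exact Hpeel1|].
  { intros x Hx. eapply Rle_trans; [apply Cmod_triangle|].
    pose proof (Cmod_slope_le x ltac:(lra)). lra. }
  apply (Rle_of_le_plus_linear _ _ L d Hd). intros x Hx.
  replace (a 2%nat - RtoC (1 / p))%C
    with ((a 2%nat + f_omega_slope lam p w x) + - (lam * seg_integral w x p))%C
    by (unfold f_omega_slope; rewrite RtoC_div by lra; unfold Cdiv; ring).
  eapply Rle_trans; [apply Cmod_triangle|].
  rewrite Cmod_opp, Cmod_mult, Cmod_R, Rabs_pos_eq by lra.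
  pose proof (Hpeel2 x Hx).
  pose proof (Cmod_seg_integral_le_length w x p Hw ltac:(lra) (proj2 Hp)).
  assert (lam * Cmod (seg_integral w x p) <= lam * (p - x)) by (apply Rmult_le_compat_l; lra).
  assert (0 <= lam * x) by (apply Rmult_le_pos; lra).
  simpl in *. lra.
Qed.

End SecondCoefficient.

(** * Constant omega: the extremal functions *)

Lemma Cminus_neq_0 (u v : C) : u <> v -> (u - v)%C <> 0%C.
Proof. intros Huv E. apply Huv. replace u with (u - v + v)%C by ring. rewrite E. ring. Qed.

Lemma Cminus_1_neq_0 (q : C) : Cmod q < 1 -> (1 - q)%C <> 0%C.
Proof. intros Hq. apply Cminus_neq_0. intros E. rewrite <- E, Cmod_1 in Hq. lra. Qed.

Lemma sum_n_Cpow (q : C) n : (1 - q)%C <> 0%C ->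
  @eq C (sum_n (fun k => q ^ k)%C n) ((1 - q ^ S n) / (1 - q))%C.
Proof.
  intros Hq. induction n as [|n IH].
  - rewrite sum_O. simpl. field. exact Hq.
  - rewrite sum_Sn. change (plus ?u ?v) with (u + v)%C. rewrite IH. simpl. field. exact Hq.
Qed.

Lemma is_series_geom_C (q : C) : Cmod q < 1 ->
  @is_series C_AbsRing C_NormedModule (fun n => q ^ n)%C (/ (1 - q))%C.
Proof.
  intros Hq.
  pose proof (Cminus_1_neq_0 q Hq) as Hq1.
  assert (Hm : 0 < Cmod (1 - q)) by (apply Cmod_gt_0, Hq1).
  apply filterlim_locally. intros eps.
  destruct (pow_lt_1_zero (Cmod q)) with (y := eps * Cmod (1 - q)) as [N HN].
  { rewrite Rabs_pos_eq by apply Cmod_ge_0. exact Hq. }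
  { apply Rmult_lt_0_compat; [apply cond_pos|exact Hm]. }
  exists N. intros n Hn. apply (norm_compat1 (V := C_NormedModule)).
  change (Cmod (sum_n (fun k => q ^ k) n - / (1 - q))%C < eps).
  replace (sum_n (fun k => q ^ k) n - / (1 - q))%C with (- q ^ S n / (1 - q))%C.
  2:{ rewrite sum_n_Cpow by exact Hq1. simpl. field. exact Hq1. }
  rewrite Cmod_div, Cmod_opp, Cmod_pow by exact Hq1.
  specialize (HN (S n) ltac:(lia)). rewrite Rabs_pos_eq in HN by (apply pow_le, Cmod_ge_0).
  apply (Rmult_lt_reg_r (Cmod (1 - q))); [exact Hm|].
  unfold Rdiv. rewrite Rmult_assoc, Rinv_l, Rmult_1_r by lra. exact HN.
Qed.

Definition partial_fraction_coeffs (al be : C) (n : nat) : C := ((al ^ n - be ^ n) / (al - be))%C.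

Lemma partial_fraction_coeffs_2 (al be : C) : al <> be ->
  partial_fraction_coeffs al be 2 = (al + be)%C.
Proof.
  intros Hab. unfold partial_fraction_coeffs. simpl. field. apply Cminus_neq_0, Hab.
Qed.

Lemma is_pseries_partial_fractions (al be z : C) : al <> be ->
  Cmod (al * z) < 1 -> Cmod (be * z) < 1 ->
  @is_pseries C_AbsRing C_NormedModule (partial_fraction_coeffs al be) z
    (z / ((1 - al * z) * (1 - be * z)))%C.
Proof.
  intros Hab Ha Hb.
  assert (Hab' : (al - be)%C <> 0%C) by (apply Cminus_neq_0, Hab).
  assert (Ha' : (1 - al * z)%C <> 0%C) by (apply Cminus_1_neq_0, Ha).
  assert (Hb' : (1 - be * z)%C <> 0%C) by (apply Cminus_1_neq_0, Hb).
  pose proof (is_series_scal (/ (al - be))%C _ _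
    (is_series_minus _ _ _ _ (is_series_geom_C _ Ha) (is_series_geom_C _ Hb))) as H.
  replace (z / ((1 - al * z) * (1 - be * z)))%C
    with (/ (al - be) * (/ (1 - al * z) - / (1 - be * z)))%C by (field; repeat split; assumption).
  unfold is_pseries. eapply is_series_ext; [|exact H].
  intros n. unfold partial_fraction_coeffs. cbv beta. rewrite (pow_n_Cpow z n).
  change (@scal _ _ ?u ?v) with (Cmult u v).
  change (@plus _ ?u ?v) with (Cplus u v).
  change (@opp _ ?u) with (Copp u).
  rewrite !Cpow_mult_l. match goal with |- ?l = ?r => change (@eq C l r) end.
  field. exact Hab'.
Qed.

Lemma f_omega_const (lam p : R) (u z : C) : p <> 0 ->
  f_omega lam p (fun _ => u) z
  = (z / ((1 - RtoC (/ p) * z) * (1 - - RtoC (lam * p) * u * z)))%C.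
Proof.
  intros Hp. assert (Hp' : RtoC p <> 0%C) by (intros E; apply Hp, RtoC_inj, E).
  unfold f_omega. rewrite seg_integral_const, RtoC_mult, RtoC_inv by exact Hp.
  unfold Cdiv. do 2 f_equal. field. exact Hp'.
Qed.

Lemma taylor_coeffs_const_omega (lam p : R) (u : C) :
  0 < lam < 1 -> 0 < p < 1 -> Cmod u <= 1 ->
  exists a : nat -> C, taylor_coeffs_in lam p (fun _ => u) a /\
    a 2%nat = (RtoC (1 / p) - RtoC (lam * p) * u)%C.
Proof.
  intros Hlam Hp Hu.
  set (al := RtoC (/ p)). set (be := (- RtoC (lam * p) * u)%C).
  assert (Hinv : 1 < / p) by (rewrite <- Rinv_1; apply Rinv_lt_contravar; lra).
  assert (Hlp : 0 < lam * p < 1) by (split; nra).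
  assert (Hal : Cmod al = / p).
  { unfold al. rewrite Cmod_R, Rabs_pos_eq; [|apply Rlt_le, Rinv_0_lt_compat]; lra. }
  assert (Hbe : Cmod be <= lam * p).
  { unfold be. rewrite Cmod_mult, Cmod_opp, Cmod_R, Rabs_pos_eq by lra. nra. }
  assert (Hab : al <> be) by (intros E; rewrite E in Hal; lra).
  exists (partial_fraction_coeffs al be). split.
  - intros z Hz. rewrite f_omega_const by lra. fold al be.
    apply is_pseries_partial_fractions; [exact Hab| |].
    + rewrite Cmod_mult, Hal. apply (Rmult_lt_reg_l p); [lra|].
      rewrite <- Rmult_assoc, Rinv_r, Rmult_1_l by lra. lra.
    + rewrite Cmod_mult. pose proof (Cmod_ge_0 z). pose proof (Cmod_ge_0 be). nra.
  - rewrite partial_fraction_coeffs_2 by exact Hab.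
    unfold al, be. unfold Rdiv. rewrite Rmult_1_l. ring.
Qed.

Lemma admissible_omega_const (u : C) : Cmod u <= 1 -> admissible_omega (fun _ => u).
Proof.
  intros Hu. split; intros z _; [apply ex_derive_const|exact Hu].
Qed.

Theorem corollary1 (lam p : R) (Hlam0 : 0 < lam) (Hlam1 : lam < 1)
  (Hp0 : 0 < p) (Hp1 : p < 1) :
  (* region of variability of a_2 is the closed disk {1/p - lam p u : |u| <= 1} *)
  (forall c : C,
     (exists (w : C -> C) (a : nat -> C),
        admissible_omega w /\ taylor_coeffs_in lam p w a /\ a 2%nat = c)
     <->
     (exists u : C, Cmod u <= 1 /\
        c = Cminus (RtoC (1 / p)) (Cmult (RtoC (lam * p)) u)))
  /\
  (* bounds on |a_2| *)
  (forall (w : C -> C) (a : nat -> C),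
     admissible_omega w -> taylor_coeffs_in lam p w a ->
     1 / p - lam * p <= Cmod (a 2%nat) <= 1 / p + lam * p).
Proof.
  assert (Hlp : 0 < lam * p) by nra.
  assert (Hcenter : Cmod (RtoC (1 / p)) = 1 / p)
    by (rewrite Cmod_R, Rabs_pos_eq; [|apply Rlt_le, Rdiv_lt_0_compat]; lra).
  split.
  - intros c. rewrite closed_disk_param by exact Hlp. split.
    + intros [w [a [Hw [Ha <-]]]]. apply (Cmod_a2_sub_inv_p_le lam p w); auto.
    + intros Hc. apply closed_disk_param in Hc as [u [Hu ->]]; [|exact Hlp].
      destruct (taylor_coeffs_const_omega lam p u) as [a [Ha Ha2]]; [lra|lra|exact Hu|].
      exists (fun _ => u), a. auto using admissible_omega_const.
  - intros w a Hw Ha. rewrite <- Hcenter.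
    apply Cmod_bounds_of_dist, (Cmod_a2_sub_inv_p_le lam p w); auto.
Qed.
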